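(* Let $n$ be a positive integer and let $p>n+1$ be a prime. Define the polynomial $$F_n(x)=\sum_{0<i_1<\cdots<i_n<p}\frac{x^{i_1}}{i_1\cdots i_n}\in\mathbb{Z}_p[x],$$ where the sum ranges over integers $i_1,\dots,i_n$. Then $$F_n(1-x)\equiv(-1)^{n-1}F_n(x)\pmod p,$$ i.e., every coefficient of the polynomial $F_n(1-x)-(-1)^{n-1}F_n(x)$ is divisible by $p$ in $\mathbb{Z}_p$.
   Context: $\mathbb{Z}_p$ denotes the ring of $p$-adic integers (the integral ring of the $p$-adic field $\mathbb{Q}_p$); the coefficients $1/(i_1\cdots i_n)$ lie in $\mathbb{Z}_p$ since each $i_j<p$. *)

From mathcomp Require Import all_boot all_order all_algebra.
Set Implicit Arguments. Unset Strict Implicit. Unset Printing Implicit Defensive.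
Import Order.TTheory GRing.Theory Num.Theory.
Local Open Scope ring_scope.

(* The index tuple (i_1,...,i_n) is
   t : n.-tuple 'I_p with 0 < i_1 < ... < i_n (strictly increasing). *)
Definition Fn (n p : nat) : {poly rat} :=
  \sum_(t : n.-tuple 'I_p | sorted ltn (0%N :: [seq val j | j <- t]))
     ((\prod_(j <- t) ((val j)%:R : rat))^-1 *: 'X^(nth 0%N [seq val j | j <- t] 0)).

(* A rational number lies in Z_p (i.e. in Z_p ∩ Q = Z_(p)) iff p does not
   divide its (reduced) denominator. *)
Definition p_integral (p : nat) (q : rat) : bool := ~~ ((p%:Z) %| denq q)%Z.

Definition p_divisible (p : nat) (c : rat) : Prop :=
  exists d : rat, p_integral p d /\ c = p%:R * d.

(* Over a field of characteristic p, write e_k(m) for the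
   elementary symmetric functions of 1/(m+1), ..., 1/(p-1).  The polynomial
   prod_(0<j<p) (1 + X/j) equals 1 - X^(p-1), as their difference has degree
   below p and vanishes at all p residues; hence e_k(0) = 0 for 0 < k < p-1.  Differentiating coefficientwise
   gives X (X - 1) F_(n+1)' = F_n for 0 < n < p-1 (and X^p - X for n = 0).
   As X (X - 1) is invariant under X -> 1 - X, induction on n shows that
   F_n(1 - X) + (-1)^n F_n has zero derivative and vanishes at 0; having degree
   below p, it is zero.  The congruence over Z_(p) is then read off from the
   identity in F_p by reducing coefficients modulo p. *)

From mathcomp Require Import all_boot all_order all_algebra.
From mathcomp Require Import ring.
Set Implicit Arguments. Unset Strict Implicit. Unset Printing Implicit Defensive.
Import Order.TTheory GRing.Theory Num.Theory.
Local Open Scope ring_scope.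

Lemma big_tuple_cons (R : Type) (idx : R) (op : Monoid.com_law idx)
    (T : finType) n (P : pred (n.+1.-tuple T)) (G : n.+1.-tuple T -> R) :
  \big[op/idx]_(t : n.+1.-tuple T | P t) G t =
  \big[op/idx]_(h : T) \big[op/idx]_(t : n.-tuple T | P [tuple of h :: t])
      G [tuple of h :: t].
Proof.
rewrite pair_big_dep /=.
rewrite (reindex (fun u : T * n.-tuple T => [tuple of u.1 :: u.2])) /=.
  by apply: eq_bigl => -[h t].
exists (fun t => (thead t, [tuple of behead t])) => [[h t] _|t _] /=.
  by congr pair; apply: val_inj.
by rewrite -tuple_eta.
Qed.

Lemma comp_poly_sum_ord (R : nzRingType) n (P Q : {poly R}) :
  (size P <= n)%N -> P \Po Q = \sum_(i < n) P`_i *: Q ^+ i.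
Proof.
move=> sPn; rewrite comp_polyE (big_ord_widen n (fun i => P`_i *: Q ^+ i) sPn).
rewrite big_mkcond; apply: eq_bigr => i _.
by case: ltnP => // sPi; rewrite nth_default ?scale0r.
Qed.

Definition Fpoly (R : unitRingType) (p n : nat) : {poly R} :=
  \sum_(t : n.-tuple 'I_p | sorted ltn (0%N :: [seq val j | j <- t]))
     ((\prod_(j <- t) ((val j)%:R : R))^-1 *: 'X^(nth 0%N [seq val j | j <- t] 0)).

Lemma Fn_Fpoly n p : Fn n p = Fpoly rat p n.
Proof. by []. Qed.

Definition reflpoly (R : comNzRingType) k (P : {poly R}) : {poly R} :=
  P \Po (1 - 'X) + (-1) ^+ k *: P.

Lemma comp_1subX_mulXsub1 (R : comNzRingType) :
  ('X * ('X - 1)) \Po (1 - 'X) = 'X * ('X - 1) :> {poly R}.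
Proof. by rewrite comp_polyM comp_polyB comp_polyX -polyC1 comp_polyC polyC1; ring. Qed.

Lemma mulXsub1_deriv_reflpoly (R : comNzRingType) k (P : {poly R}) :
  'X * ('X - 1) * (reflpoly k.+1 P)^`() = - reflpoly k ('X * ('X - 1) * P^`()).
Proof.
rewrite /reflpoly derivD derivZ deriv_comp derivB derivX -polyC1 derivC sub0r.
rewrite polyC1 mulrN1 mulrDr mulrN -{1}comp_1subX_mulXsub1 -comp_polyM.
by rewrite -!scalerAr exprS mulN1r scaleNr opprD.
Qed.

Section PrimeCharacteristic.
Variables (F : fieldType) (p : nat).
Hypothesis charFp : p \in [pchar F].

Let p_prime : prime p := pcharf_prime charFp.
Let p_gt0 : (0 < p)%N := prime_gt0 p_prime.

Lemma natr_pchar_neq0 i : (0 < i)%N -> (i < p)%N -> i%:R != 0 :> F.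
Proof. by move=> i_gt0 ltip; rewrite -(dvdn_pcharf charFp) gtnNdvd. Qed.

Lemma natr_pchar_inj i j : (i < p)%N -> (j < p)%N -> i%:R = j%:R :> F -> i = j.
Proof.
wlog leij : i j / (i <= j)%N.
  move=> wlog_ij ltip ltjp eqij.
  by case: (leqP i j) => [leij | /ltnW leji]; [exact: wlog_ij | exact/esym/wlog_ij].
move=> ltip ltjp eqij; apply/eqP; rewrite eqn_leq leij -subn_eq0 /=.
have : (p %| j - i)%N by rewrite (dvdn_pcharf charFp) natrB // eqij subrr.
apply: contraLR; rewrite -lt0n => ji_gt0.
by rewrite gtnNdvd // (leq_ltn_trans (leq_subr _ _) ltjp).
Qed.

Lemma natr_pchar_fermat i : (0 < i)%N -> (i < p)%N -> i%:R ^+ p.-1 = 1 :> F.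
Proof.
move=> i_gt0 ltip; have := pFrobenius_aut_nat charFp i; rewrite pFrobenius_autE.
rewrite -(prednK p_gt0) exprSr => /(congr1 (fun x => x / i%:R)).
by rewrite mulfK ?divff ?natr_pchar_neq0.
Qed.

Definition einv n m : F :=
  \sum_(t : n.-tuple 'I_p | sorted ltn (m :: [seq val j | j <- t]))
     \prod_(j <- t) (val j)%:R^-1.

Lemma einv0 m : einv 0 m = 1.
Proof. by rewrite /einv (big_pred1 [tuple]) ?big_nil // => t; rewrite tuple0 /= eqxx. Qed.

Lemma einvS n m : einv n.+1 m = \sum_(m.+1 <= h < p) h%:R^-1 * einv n h.
Proof.
rewrite /einv big_tuple_cons big_geq_mkord /= (bigID (fun h : 'I_p => (m < h)%N)) /=.
rewrite [X in _ + X]big1 ?addr0; last first.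
  by move=> h /negbTE le_hm; rewrite big_pred0 // => t /=; rewrite le_hm.
apply: eq_big => // h lt_mh; rewrite mulr_sumr.
by apply: eq_big => [t|t _]; rewrite /= ?lt_mh ?big_cons.
Qed.

Lemma einvSr n m : (m.+1 < p)%N ->
  einv n.+1 m = m.+1%:R^-1 * einv n m.+1 + einv n.+1 m.+1.
Proof. by move=> ltm1p; rewrite !einvS big_ltn. Qed.

Lemma einv_eq0 k m : (p <= k.+1 + m)%N -> einv k.+1 m = 0.
Proof.
elim: k m => [|k IHk] m le_pkm; first by rewrite einvS big_geq.
rewrite einvS big1_seq // => h /andP[_]; rewrite mem_index_iota => /andP[lt_mh _].
by rewrite IHk ?mulr0 // (leq_trans le_pkm) // !addSn ltnS ltn_add2l.
Qed.

Definition einv_poly m : {poly F} := \prod_(m.+1 <= i < p) (1 + i%:R^-1 *: 'X).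

Lemma coef_einv_poly m k : (einv_poly m)`_k = einv k m.
Proof.
have [d le_pdm] : exists d, (p <= m.+1 + d)%N by exists p; rewrite leq_addl.
have coef_ge m' : (p <= m'.+1)%N -> forall k, (einv_poly m')`_k = einv k m'.
  move=> le_pm1 [|j]; rewrite /einv_poly big_geq // coef1 ?einv0 //.
  by rewrite einv_eq0 // (leq_trans le_pm1) // addSn ltnS leq_addl.
elim: d m le_pdm k => [|d IHd] m le_pdm k; have [/coef_ge//|lt_m1p] := leqP p m.+1.
  by move: le_pdm; rewrite addn0 leqNgt lt_m1p.
rewrite /einv_poly big_ltn // -/(einv_poly m.+1) mulrDl mul1r coefD -scalerAl coefZ.
rewrite coefXM; have le_pd1 : (p <= m.+2 + d)%N by rewrite addSnnS.
case: k => [|k] /=; first by rewrite !IHd // !einv0 mulr0 addr0.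
by rewrite !IHd // [RHS]einvSr // addrC.
Qed.

(* At a residue i <> 0, the factor j = p - i vanishes and i^(p-1) = 1. *)
Lemma einv_poly0 : einv_poly 0 = 1 - 'X^(p.-1).
Proof.
apply: subr0_eq; apply: (@roots_geq_poly_eq0 _ _ [seq i%:R | i <- iota 0 p]).
- apply/allP => x /mapP[i]; rewrite mem_iota add0n => /andP[_ ltip] ->.
  rewrite rootE !hornerE /einv_poly horner_prod.
  case: i ltip => [|i] ltip.
    rewrite big1 => [|j _]; last by rewrite !hornerE.
    by rewrite expr0n eqn0Ngt -subn1 subn_gt0 prime_gt1 // subr0 subrr.
  rewrite natr_pchar_fermat // subrr subr0.
  have jin : (p - i.+1 \in index_iota 1 p)%N.
    by rewrite mem_index_iota subn_gt0 ltip ltn_subrL.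
  rewrite (bigD1_seq _ jin (iota_uniq _ _)) /= !hornerE natrB ?(ltnW ltip) //.
  by rewrite (pcharf0 charFp) sub0r invrN mulNr mulVf ?natr_pchar_neq0 // subrr mul0r.
- rewrite map_inj_in_uniq ?iota_uniq // => i j; rewrite !mem_iota !add0n.
  by move=> /andP[_ ltip] /andP[_ ltjp]; apply: natr_pchar_inj.
rewrite size_map size_iota (leq_trans (size_polyD _ _)) // geq_max size_polyN.
apply/andP; split.
  apply/leq_sizeP => j le_pj; rewrite coef_einv_poly.
  case: j le_pj => [|j] le_pj; last by rewrite einv_eq0 ?addn0.
  by rewrite leqn0 eqn0Ngt p_gt0 in le_pj.
rewrite (leq_trans (size_polyD _ _)) // geq_max size_polyN size_polyXn size_poly1.
by rewrite p_gt0 ltn_predL.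
Qed.

Lemma einv_0_eq0 k : (0 < k)%N -> (k < p.-1)%N -> einv k 0 = 0.
Proof.
move=> k_gt0 lt_kp1; rewrite -coef_einv_poly einv_poly0 coefB coef1 coefXn.
by rewrite (gtn_eqF k_gt0) (ltn_eqF lt_kp1) subrr.
Qed.

(* For n > 0, the coefficient of X^m in F_n is (1/m) e_(n-1)(1/(m+1), ...),
   i.e. the difference einv n (m-1) - einv n m; in this form the degenerate
   case n = 0 gives Ftel 0 = 0, whereas Fpoly F p 0 = 1. *)
Definition Ftel n : {poly F} := \sum_(1 <= m < p) (einv n m.-1 - einv n m) *: 'X^m.

Lemma Ftel0 : Ftel 0 = 0.
Proof. by rewrite /Ftel big1 // => m _; rewrite !einv0 subrr scale0r. Qed.

Lemma Fpoly_Ftel n : Fpoly F p n.+1 = Ftel n.+1.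
Proof.
rewrite /Fpoly big_tuple_cons /Ftel big_geq_mkord /= (bigID (fun h : 'I_p => (0 < h)%N)) /=.
rewrite [X in _ + X]big1 ?addr0; last first.
  by move=> h /negbTE h_eq0; rewrite big_pred0 // => t /=; rewrite h_eq0.
apply: eq_big => // h h_gt0.
rewrite einvSr ?prednK // addrK /einv -scaler_suml mulr_sumr; congr (_ *: _).
apply: eq_big => [t|t _]; first by rewrite /= h_gt0.
by rewrite big_cons invfM prodfV mulrC.
Qed.

Lemma mulX_deriv_Ftel n :
  'X * (Ftel n.+1)^`() = \sum_(1 <= m < p) einv n m *: 'X^m.
Proof.
rewrite /Ftel raddf_sum mulr_sumr big_nat_cond [RHS]big_nat_cond.
apply: eq_bigr => m /andP[/andP[m_gt0 ltmp] _].
rewrite /= derivZ derivXn -scalerAr mulrnAr -exprS prednK // -scaler_nat scalerA.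
by rewrite einvSr ?prednK // addrK mulrAC mulVf ?mul1r ?natr_pchar_neq0.
Qed.

Lemma mulXsub1_sum_einv n :
  ('X - 1) * \sum_(1 <= m < p) einv n m *: 'X^m =
  einv n p.-1 *: 'X^p - einv n 0 *: 'X + Ftel n.
Proof.
pose g m : {poly F} := einv n m *: 'X^(m.+1).
have -> : ('X - 1) * \sum_(1 <= m < p) einv n m *: 'X^m =
    \sum_(0 <= m < p) g m - einv n 0 *: 'X - \sum_(1 <= m < p) einv n m *: 'X^m.
  rewrite mulrBl mul1r mulr_sumr (big_ltn p_gt0) /g expr1 (addrC (_ *: 'X)) addrK.
  by congr (_ - _); apply: eq_bigr => m _; rewrite -scalerAr -exprS.
have -> : Ftel n = \sum_(0 <= m < p.-1) g m - \sum_(1 <= m < p) einv n m *: 'X^m.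
  by rewrite /Ftel; under eq_bigr do rewrite scalerBl; rewrite sumrB big_add1.
rewrite -{1}(prednK p_gt0) big_nat_recr //= /g prednK //; ring.
Qed.

Lemma mulXsub1_deriv_Ftel n :
  'X * ('X - 1) * (Ftel n.+1)^`() = einv n p.-1 *: 'X^p - einv n 0 *: 'X + Ftel n.
Proof. by rewrite [_ * ('X - 1)]mulrC -mulrA mulX_deriv_Ftel mulXsub1_sum_einv. Qed.

Lemma Ftel_coef0 n : (Ftel n)`_0 = 0.
Proof.
rewrite /Ftel coef_sum big1_seq // => m /andP[_]; rewrite mem_index_iota => /andP[m_gt0 _].
by rewrite coefZ coefXn eq_sym gtn_eqF // mulr0.
Qed.

Lemma size_Ftel n : (size (Ftel n) <= p)%N.
Proof.
apply/leq_sizeP => j le_pj; rewrite /Ftel coef_sum big1_seq // => m /andP[_].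
rewrite mem_index_iota => /andP[_ ltmp].
by rewrite coefZ coefXn (gtn_eqF (leq_trans ltmp le_pj)) mulr0.
Qed.

Lemma horner_Ftel1 n : (Ftel n).[1] = einv n 0 - einv n p.-1.
Proof.
rewrite /Ftel horner_sum; under eq_bigr do rewrite hornerZ hornerXn expr1n mulr1.
rewrite big_add1 /= -opprB -telescope_sumr // -sumrN.
by apply: eq_bigr => m _; rewrite opprB.
Qed.

Lemma deriv_eq0_polyC (P : {poly F}) :
  (size P <= p)%N -> P^`() = 0 -> P = (P`_0)%:P.
Proof.
move=> sPp dP0; apply/polyP => -[|j]; rewrite coefC //=.
have [ltj1p|le_pj1] := ltnP j.+1 p; last exact: (leq_sizeP _ _ sPp).
have /eqP := congr1 (fun Q : {poly F} => Q`_j) dP0.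
rewrite coef_deriv coef0 -mulr_natr mulf_eq0 (negbTE (natr_pchar_neq0 _ _)) //.
by rewrite orbF => /eqP.
Qed.

Lemma size_reflpoly k (P : {poly F}) : (size (reflpoly k P) <= size P)%N.
Proof.
have size_1subX : size (1 - 'X : {poly F}) = 2.
  by rewrite -opprB size_polyN -polyC1 size_XsubC.
rewrite (leq_trans (size_polyD _ _)) // geq_max size_comp_poly2 // leqnn.
exact: size_scale_leq.
Qed.

Lemma exp_1subX_pchar : (1 - 'X) ^+ p = 1 - 'X ^+ p :> {poly F}.
Proof.
have charPp : p \in [pchar {poly F}] by rewrite pchar_poly.
have := pFrobenius_autB_comm charPp (esym (commr1 'X)).
by rewrite !pFrobenius_autE expr1n.
Qed.

Lemma reflpoly_Ftel n : (n < p.-1)%N -> reflpoly n (Ftel n) = 0.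
Proof.
elim: n => [_|n IHn lt_n1p]; first by rewrite Ftel0 /reflpoly comp_poly0 scaler0 addr0.
have W_neq0 : 'X * ('X - 1) != 0 :> {poly F}.
  by rewrite mulf_neq0 ?polyX_eq0 // -polyC1 -size_poly_eq0 size_XsubC.
have dA0 : (reflpoly n.+1 (Ftel n.+1))^`() = 0.
  apply: (mulfI W_neq0); rewrite mulr0 mulXsub1_deriv_reflpoly mulXsub1_deriv_Ftel.
  case: n IHn lt_n1p => [_ _|n IHn lt_n2p].
    rewrite Ftel0 !einv0 addr0 !scale1r /reflpoly comp_polyB comp_polyX comp_Xn_poly.
    by rewrite exp_1subX_pchar scale1r; ring.
  have lt_n1p := ltnW lt_n2p.
  rewrite einv_0_eq0 // einv_eq0; last by rewrite addSnnS prednK // leq_addl.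
  by rewrite !scale0r subrr add0r IHn ?oppr0.
rewrite (deriv_eq0_polyC _ dA0); last exact: leq_trans (size_reflpoly _ _) (size_Ftel _).
rewrite -horner_coef0 /reflpoly hornerD hornerZ horner_comp !hornerE horner_coef0.
rewrite Ftel_coef0 mulr0 addr0 subr0 horner_Ftel1 einv_0_eq0 //.
by rewrite einv_eq0 ?subrr // addSnnS prednK // leq_addl.
Qed.

Lemma Fpoly_reflect n : (0 < n)%N -> (n.+1 < p)%N ->
  Fpoly F p n \Po (1 - 'X) = (-1) ^+ n.-1 *: Fpoly F p n.
Proof.
case: n => [//|n] _ lt_n2p; rewrite Fpoly_Ftel.
have lt_n1p : (n.+1 < p.-1)%N by rewrite -ltnS prednK.
have /eqP := reflpoly_Ftel lt_n1p.
by rewrite addr_eq0 => /eqP ->; rewrite exprS mulN1r scaleNr opprK.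
Qed.

End PrimeCharacteristic.

Lemma dvdz_denq_mul (x : rat) (b d : int) : x * d%:~R = b%:~R -> (denq x %| d)%Z.
Proof.
move=> eq_xd; have num_den : numq x * d = b * denq x.
  by apply: (@intr_inj rat); rewrite !intrM numqE -eq_xd; ring.
have cop : coprimez (denq x) (numq x) by rewrite coprimez_sym coprimezE coprime_num_den.
by rewrite -(Gauss_dvdzr _ cop) num_den dvdz_mull.
Qed.

Section Reduction.
Variable p : nat.
Hypothesis p_prime : prime p.

(* [reduces q z]: the rational q lies in Z_(p) and its residue class mod p is
   z, witnessed by a common integer value a of q d and z d for some d prime to p. *)
Definition reduces (q : rat) (z : 'F_p) : Prop := exists (a : int) (d : nat),
  [/\ ~~ (p %| d)%N, q * d%:R = a%:~R & z * d%:R = a%:~R].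

Lemma natr_Fp_neq0 d : ~~ (p %| d)%N -> d%:R != 0 :> 'F_p.
Proof. by rewrite (dvdn_pcharf (pchar_Fp p_prime)). Qed.

Lemma natr_rat_neq0 d : ~~ (p %| d)%N -> d%:R != 0 :> rat.
Proof. by apply: contra; rewrite pnatr_eq0 => /eqP ->; rewrite dvdn0. Qed.

Lemma reduces_nat m : reduces m%:R m%:R.
Proof. by exists m%:Z, 1%N; rewrite !mulr1 -!pmulrn Euclid_dvd1. Qed.

Lemma reducesD q1 z1 q2 z2 :
  reduces q1 z1 -> reduces q2 z2 -> reduces (q1 + q2) (z1 + z2).
Proof.
move=> [a1 [d1 [pNd1 eq1 eqz1]]] [a2 [d2 [pNd2 eq2 eqz2]]].
exists (a1 * d2%:Z + a2 * d1%:Z), (d1 * d2)%N.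
rewrite Euclid_dvdM // negb_or pNd1 pNd2 !natrM !intrD !intrM.
by split=> //; [rewrite -eq1 -eq2 | rewrite -eqz1 -eqz2]; ring.
Qed.

Lemma reducesM q1 z1 q2 z2 :
  reduces q1 z1 -> reduces q2 z2 -> reduces (q1 * q2) (z1 * z2).
Proof.
move=> [a1 [d1 [pNd1 eq1 eqz1]]] [a2 [d2 [pNd2 eq2 eqz2]]].
exists (a1 * a2), (d1 * d2)%N.
rewrite Euclid_dvdM // negb_or pNd1 pNd2 !natrM !intrM.
by split=> //; [rewrite -eq1 -eq2 | rewrite -eqz1 -eqz2]; ring.
Qed.

Lemma reducesN q z : reduces q z -> reduces (- q) (- z).
Proof. by move=> [a [d [pNd eq eqz]]]; exists (- a), d; rewrite !mulNr eq eqz !intrN. Qed.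

Lemma reducesB q1 z1 q2 z2 :
  reduces q1 z1 -> reduces q2 z2 -> reduces (q1 - q2) (z1 - z2).
Proof. by move=> r1 /reducesN; apply: reducesD. Qed.

Lemma reduces_sign k : reduces ((-1) ^+ k) ((-1) ^+ k).
Proof.
elim: k => [|k IHk]; first exact: (reduces_nat 1).
by rewrite !exprS; apply: reducesM IHk; apply: reducesN (reduces_nat 1).
Qed.

Lemma reduces_natV d : ~~ (p %| d)%N -> reduces d%:R^-1 d%:R^-1.
Proof. by move=> pNd; exists 1, d; rewrite !mulVf ?natr_rat_neq0 ?natr_Fp_neq0. Qed.

Lemma reduces_sum I r (P : pred I) (f : I -> rat) (g : I -> 'F_p) :
  (forall i, P i -> reduces (f i) (g i)) ->
  reduces (\sum_(i <- r | P i) f i) (\sum_(i <- r | P i) g i).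
Proof. by apply: big_ind2 => //; [apply: (reduces_nat 0) | apply: reducesD]. Qed.

Lemma reduces0_p_divisible q : reduces q 0 -> p_divisible p q.
Proof.
move=> [a [d [pNd eq_qd]]]; rewrite mul0r => /esym/eqP.
rewrite -(dvdz_pcharf (pchar_Fp p_prime)) => /divzK eq_a.
set b := (a %/ p)%Z in eq_a; have d_neq0 := natr_rat_neq0 pNd.
exists (b%:~R / d%:R); split.
  have den_d : (denq (b%:~R / d%:R) %| d%:Z)%Z.
    by apply: (@dvdz_denq_mul _ b d); rewrite divfK.
  by apply: contra pNd => p_den; have := dvdz_trans p_den den_d; rewrite dvdzE.
apply: (mulIf d_neq0); rewrite eq_qd -eq_a intrM mulrC mulrA divfK //.
Qed.

Definition preduces (P : {poly rat}) (Q : {poly 'F_p}) : Prop :=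
  forall k, reduces P`_k Q`_k.

Lemma preducesB P1 Q1 P2 Q2 :
  preduces P1 Q1 -> preduces P2 Q2 -> preduces (P1 - P2) (Q1 - Q2).
Proof. by move=> r1 r2 k; rewrite !coefB; apply: reducesB. Qed.

Lemma preducesZ c z P Q : reduces c z -> preduces P Q -> preduces (c *: P) (z *: Q).
Proof. by move=> rc rPQ k; rewrite !coefZ; apply: reducesM. Qed.

Lemma preducesM P1 Q1 P2 Q2 :
  preduces P1 Q1 -> preduces P2 Q2 -> preduces (P1 * P2) (Q1 * Q2).
Proof. by move=> r1 r2 k; rewrite !coefM; apply: reduces_sum => i _; apply: reducesM. Qed.

Lemma preducesXn m : preduces 'X^m 'X^m.
Proof. by move=> k; rewrite !coefXn; apply: reduces_nat. Qed.

Lemma preducesX P Q m : preduces P Q -> preduces (P ^+ m) (Q ^+ m).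
Proof.
move=> rPQ; elim: m => [|m IHm]; first exact: preducesXn 0.
by rewrite !exprS; apply: preducesM.
Qed.

Lemma preduces_sum I r (P : pred I) (f : I -> {poly rat}) (g : I -> {poly 'F_p}) :
  (forall i, P i -> preduces (f i) (g i)) ->
  preduces (\sum_(i <- r | P i) f i) (\sum_(i <- r | P i) g i).
Proof. by move=> rfg k; rewrite !coef_sum; apply: reduces_sum => i /rfg. Qed.

Lemma preduces_comp P Q R S :
  preduces P Q -> preduces R S -> preduces (P \Po R) (Q \Po S).
Proof.
move=> rPQ rRS; rewrite (comp_poly_sum_ord R (leq_maxl (size P) (size Q))).
rewrite (comp_poly_sum_ord S (leq_maxr (size P) (size Q))).
by apply: preduces_sum => i _; apply: preducesZ (rPQ i) (preducesX _ rRS).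
Qed.

Lemma preduces_Fpoly n : preduces (Fpoly rat p n) (Fpoly 'F_p p n).
Proof.
apply: preduces_sum => t t_sorted; apply: preducesZ (preducesXn _).
rewrite -!natr_prod; apply: reduces_natV; rewrite Euclid_dvd_prod // big_has.
apply/hasPn => j j_in_t; rewrite gtnNdvd ?ltn_ord //.
by move/allP: (order_path_min ltn_trans t_sorted); apply; apply: map_f.
Qed.

Lemma preduces_Fpoly_reflect n k :
  preduces (Fpoly rat p n \Po (1 - 'X) - (-1) ^+ k *: Fpoly rat p n)
           (Fpoly 'F_p p n \Po (1 - 'X) - (-1) ^+ k *: Fpoly 'F_p p n).
Proof.
have rF := preduces_Fpoly n.
have r1subX : preduces (1 - 'X) (1 - 'X) := preducesB (preducesXn 0) (preducesXn 1).
exact: preducesB (preduces_comp rF r1subX) (preducesZ (reduces_sign k) rF).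
Qed.

End Reduction.

Theorem theorem1p2 (n p : nat) :
  (0 < n)%N -> prime p -> (n.+1 < p)%N ->
  forall k : nat,
    p_divisible p ((Fn n p \Po (1 - 'X) - ((-1) ^+ n.-1) *: Fn n p)`_k).
Proof.
move=> n_gt0 p_prime lt_n1p k; apply: (reduces0_p_divisible p_prime).
rewrite Fn_Fpoly; have := preduces_Fpoly_reflect p_prime n n.-1 k.
by rewrite (Fpoly_reflect (pchar_Fp p_prime) n_gt0 lt_n1p) subrr coef0.
Qed.
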